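(* Let $r,\alpha\in\mathbb R$, $\sigma>0$, and let $d_1<d_2$ be the (assumed real and distinct) roots of $P(d)=\frac{\sigma^2}{2}d^2+(\alpha-\frac{\sigma^2}{2})d-r$. Let $x>0$, $\beta\in\mathbb R$, $a,b>0$, and for $c>0$, $t>0$ put $$H(t;c)=\Phi\left(\frac{1}{\sigma\sqrt t}\ln\left(\frac{c}{x}\right)+\sigma\left(\frac{d_1+d_2}{2}-\beta\right)\sqrt t\right),$$ where $\Phi$ is the standard normal distribution function. Then: 1) if $\beta<d_2$, then $\lim_{t\to\infty}x^\beta e^{P(\beta)t}[1-H(t;a)]=0$; 2) if $\beta>d_1$, then $\lim_{t\to\infty}x^\beta e^{P(\beta)t}H(t;b)=0$; 3) if $\beta=0$, then $\lim_{t\to\infty}x^\beta e^{P(\beta)t}[H(t;b)-H(t;a)]=0$. *)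

From Stdlib Require Import Reals.
From Coquelicot Require Import Coquelicot.
Open Scope R_scope.

Definition Phi (z : R) : R :=
  / sqrt (2 * PI) *
  RInt_gen (fun u => exp (- u ^ 2 / 2)) (Rbar_locally m_infty) (at_point z).

Definition Pquad (r alpha sigma d : R) : R :=
  sigma ^ 2 / 2 * d ^ 2 + (alpha - sigma ^ 2 / 2) * d - r.

Definition Hfun (sigma x d1 d2 beta c t : R) : R :=
  Phi (/ (sigma * sqrt t) * ln (c / x) + sigma * ((d1 + d2) / 2 - beta) * sqrt t).

From Stdlib Require Import Reals Lra.
From Coquelicot Require Import Coquelicot.
Open Scope R_scope.

(* With G(x) = int_0^x exp(-u^2/2) du and
   h(x) = int_0^1 exp(-x^2 (1 + t^2) / 2) / (1 + t^2) dt, the function G^2 + 2 h has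
   zero derivative, hence G(x)^2 = pi/2 - 2 h(x).  Since 0 <= h(x) <= exp(-x^2/2), this
   yields at once the normalisation Phi(z) = 1/2 + G(z) / sqrt(2 pi) and the tail bound
   1 - Phi(z) <= (2/pi) exp(-z^2/2) for z >= 0.
   Put mu = (d1 + d2)/2 - beta, delta = (d2 - d1)/2 and z = L/(sigma sqrt t) + sigma mu sqrt t
   with L = ln(c/x).  Then P(beta) = sigma^2/2 (mu^2 - delta^2) and
   P(beta) t - z^2/2 <= - L mu - sigma^2 delta^2 t / 2, so for mu > 0 the Gaussian tail
   beats the exponential factor, while for -delta < mu <= 0 already P(beta) < 0.  This is
   part 1 (beta < d2 means mu > -delta); part 2 follows from Phi(-z) = 1 - Phi(z), and
   part 3 is a difference of two instances of part 1 or of part 2. *)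

Lemma exp_le x y : x <= y -> exp x <= exp y.
Proof. intros [H | ->]; [left; now apply exp_increasing | lra]. Qed.

Definition gauss (u : R) : R := exp (- u ^ 2 / 2).

Lemma continuous_gauss x : continuous gauss x.
Proof.
  apply (ex_derive_continuous (K := R_AbsRing) (V := R_NormedModule)).
  unfold gauss; auto_derive; easy.
Qed.

Lemma ex_RInt_gauss a b : ex_RInt gauss a b.
Proof.
  apply (ex_RInt_continuous (V := R_CompleteNormedModule)); intros; apply continuous_gauss.
Qed.

Definition gauss_int (x : R) : R := RInt gauss 0 x.

Lemma is_derive_gauss_int x : is_derive gauss_int x (gauss x).
Proof.
  apply (is_derive_RInt gauss gauss_int 0); [|apply continuous_gauss].
  apply filter_forall; intros y; apply (RInt_correct (V := R_CompleteNormedModule)), ex_RInt_gauss.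
Qed.

Lemma gauss_int_ge0 x : 0 <= x -> 0 <= gauss_int x.
Proof.
  intros Hx; apply RInt_ge_0; [exact Hx | apply ex_RInt_gauss |].
  intros u _; left; apply exp_pos.
Qed.

Lemma gauss_int_opp x : gauss_int (- x) = - gauss_int x.
Proof.
  unfold gauss_int.
  assert (E := RInt_comp_lin (V := R_CompleteNormedModule) gauss (-1) 0 0 x (ex_RInt_gauss _ _)).
  replace (-1 * 0 + 0) with 0 in E by ring; replace (-1 * x + 0) with (- x) in E by ring.
  rewrite <- E, <- (RInt_opp (V := R_CompleteNormedModule) gauss) by apply ex_RInt_gauss.
  apply RInt_ext; intros u _; unfold gauss, scal, opp; simpl; unfold mult; simpl.
  replace ((-1 * u + 0) * ((-1 * u + 0) * 1)) with (u * (u * 1)) by ring; ring.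
Qed.

Definition gauss_kernel (x t : R) : R := exp (- (x ^ 2 * (1 + t ^ 2)) / 2) / (1 + t ^ 2).

Definition gauss_aux (x : R) : R := RInt (gauss_kernel x) 0 1.

Lemma ex_RInt_gauss_kernel x a b : ex_RInt (gauss_kernel x) a b.
Proof.
  apply (ex_RInt_continuous (V := R_CompleteNormedModule)); intros t _.
  apply (ex_derive_continuous (K := R_AbsRing) (V := R_NormedModule)).
  unfold gauss_kernel; auto_derive; nra.
Qed.

Lemma is_derive_gauss_kernel x t :
  is_derive (fun u => gauss_kernel u t) x (- x * exp (- (x ^ 2 * (1 + t ^ 2)) / 2)).
Proof.
  unfold gauss_kernel; auto_derive; [easy |].
  replace (- (x * (x * 1) * (1 + t * (t * 1))) * / 2) with (- (x ^ 2 * (1 + t ^ 2)) / 2)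
    by (simpl; field).
  field; nra.
Qed.

Lemma continuity_2d_pt_gauss_kernel_deriv x t :
  continuity_2d_pt (fun u v => - u * exp (- (u ^ 2 * (1 + v ^ 2)) / 2)) x t.
Proof.
  apply continuity_2d_pt_mult; [apply continuity_2d_pt_opp, continuity_2d_pt_id1 |].
  apply (continuity_1d_2d_pt_comp exp); [apply derivable_continuous_pt, derivable_pt_exp |].
  unfold Rdiv; simpl.
  repeat first [ apply continuity_2d_pt_mult | apply continuity_2d_pt_plus
               | apply continuity_2d_pt_opp | apply continuity_2d_pt_id1
               | apply continuity_2d_pt_id2 | apply continuity_2d_pt_const ].
Qed.

Lemma RInt_gauss_kernel_deriv x :
  RInt (fun t => - x * exp (- (x ^ 2 * (1 + t ^ 2)) / 2)) 0 1 = - gauss x * gauss_int x.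
Proof.
  transitivity (RInt (fun t => scal (- gauss x) (scal x (gauss (x * t + 0)))) 0 1).
  { apply RInt_ext; intros t _; unfold gauss, scal; simpl; unfold mult; simpl.
    replace (- (x * (x * 1) * (1 + t * (t * 1))) / 2)
      with (- (x * (x * 1)) / 2 + - ((x * t + 0) * ((x * t + 0) * 1)) / 2) by field.
    rewrite exp_plus; ring. }
  rewrite (RInt_scal (V := R_CompleteNormedModule)), (RInt_comp_lin (V := R_CompleteNormedModule)).
  - rewrite Rmult_0_r, Rmult_1_r, !Rplus_0_r; reflexivity.
  - apply ex_RInt_gauss.
  - apply (ex_RInt_continuous (V := R_CompleteNormedModule)); intros u _.
    apply (ex_derive_continuous (K := R_AbsRing) (V := R_NormedModule)).
    unfold gauss, scal; simpl; unfold mult; simpl; auto_derive; easy.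
Qed.

Lemma is_derive_gauss_aux x : is_derive gauss_aux x (- gauss x * gauss_int x).
Proof.
  rewrite <- RInt_gauss_kernel_deriv.
  erewrite RInt_ext.
  2: { intros t _; symmetry; apply is_derive_unique, is_derive_gauss_kernel. }
  apply (is_derive_RInt_param gauss_kernel 0 1 x).
  - apply filter_forall; intros y t _; eexists; apply is_derive_gauss_kernel.
  - intros t _.
    eapply continuity_2d_pt_ext; [| apply continuity_2d_pt_gauss_kernel_deriv].
    intros u v; symmetry; apply is_derive_unique, is_derive_gauss_kernel.
  - apply filter_forall; intros y; apply ex_RInt_gauss_kernel.
Qed.

Lemma gauss_aux_0 : gauss_aux 0 = PI / 4.
Proof.
  rewrite <- atan_1; unfold gauss_aux.
  transitivity (RInt (fun t => / (1 + t²)) 0 1).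
  { apply RInt_ext; intros t _; unfold gauss_kernel, Rsqr.
    replace (- (0 ^ 2 * (1 + t ^ 2)) / 2) with 0 by field; rewrite exp_0; simpl; field; nra. }
  apply (is_RInt_unique (V := R_CompleteNormedModule)).
  replace (atan 1) with (minus (atan 1) (atan 0))
    by (rewrite atan_0; unfold minus, plus, opp; simpl; ring).
  apply (is_RInt_derive (V := R_CompleteNormedModule) atan); [intros; apply is_derive_atan |].
  intros t _; apply (ex_derive_continuous (K := R_AbsRing) (V := R_NormedModule)).
  auto_derive; unfold Rsqr; nra.
Qed.

Lemma gauss_aux_bounds x : 0 <= gauss_aux x <= gauss x.
Proof.
  unfold gauss_aux, gauss_kernel; split.
  - apply RInt_ge_0; [lra | apply ex_RInt_gauss_kernel |].
    intros t _; apply Rle_mult_inv_pos; [left; apply exp_pos | nra].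
  - replace (gauss x) with (RInt (fun _ => gauss x) 0 1)
      by (rewrite (RInt_const (V := R_CompleteNormedModule));
          unfold scal; simpl; unfold mult; simpl; ring).
    apply RInt_le;
      [lra | apply ex_RInt_gauss_kernel | apply (ex_RInt_const (V := R_NormedModule)) |].
    intros t _.
    assert (Hexp : exp (- (x ^ 2 * (1 + t ^ 2)) / 2) <= gauss x) by (apply exp_le; nra).
    assert (0 < exp (- (x ^ 2 * (1 + t ^ 2)) / 2)) by apply exp_pos.
    apply Rle_trans with (exp (- (x ^ 2 * (1 + t ^ 2)) / 2)); [| exact Hexp].
    apply Rmult_le_reg_r with (1 + t ^ 2); [nra |].
    unfold Rdiv; rewrite Rmult_assoc, Rinv_l by nra; nra.
Qed.

Lemma gauss_int_sq x : gauss_int x ^ 2 = PI / 2 - 2 * gauss_aux x.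
Proof.
  set (F y := gauss_int y ^ 2 + 2 * gauss_aux y).
  assert (HF : forall y, is_derive F y zero).
  { intros y.
    replace (@zero R_NormedModule) with
      (plus (INR 2 * gauss y * gauss_int y ^ 1) (scal 2 (- gauss y * gauss_int y)))
      by (unfold plus, scal, zero; simpl; unfold mult; simpl; ring).
    apply (is_derive_plus (K := R_AbsRing) (V := R_NormedModule)).
    - apply is_derive_pow, is_derive_gauss_int.
    - apply is_derive_scal, is_derive_gauss_aux. }
  assert (HF0 : F 0 = PI / 2).
  { unfold F, gauss_int; rewrite (RInt_point (V := R_CompleteNormedModule)), gauss_aux_0.
    unfold zero; simpl; field. }
  assert (E : F x = F 0).
  { destruct (Rtotal_order x 0) as [H | [-> | H]].
    - apply (eq_is_derive F); [intros; apply HF | exact H].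
    - reflexivity.
    - symmetry; apply (eq_is_derive F); [intros; apply HF | exact H]. }
  rewrite HF0 in E; unfold F in E; lra.
Qed.

Lemma sqrt_PI_2_pos : 0 < sqrt (PI / 2).
Proof. apply sqrt_lt_R0; assert (H := PI_RGT_0); lra. Qed.

Lemma sqrt_PI_2_sq : sqrt (PI / 2) * sqrt (PI / 2) = PI / 2.
Proof. apply sqrt_sqrt; assert (H := PI_RGT_0); lra. Qed.

Lemma gauss_int_bounds x : 0 <= x ->
  0 <= gauss_int x <= sqrt (PI / 2) /\
  sqrt (PI / 2) - gauss_int x <= 2 / sqrt (PI / 2) * gauss x.
Proof.
  intros Hx.
  assert (H0 := gauss_int_ge0 x Hx); assert (Hsq := gauss_int_sq x).
  assert (Haux := gauss_aux_bounds x).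
  assert (Hs := sqrt_PI_2_pos); assert (Hs2 := sqrt_PI_2_sq).
  set (s := sqrt (PI / 2)) in *.
  assert (Hle : gauss_int x <= s) by nra.
  split; [lra |].
  apply Rmult_le_reg_r with s; [exact Hs |].
  replace (2 / s * gauss x * s) with (2 * gauss x) by (field; lra); nra.
Qed.

Lemma Rabs_gauss_int_le x : Rabs (gauss_int x) <= sqrt (PI / 2).
Proof.
  destruct (Rle_dec 0 x) as [H | H].
  - destruct (gauss_int_bounds x H) as [[H0 H1] _]; rewrite Rabs_right; lra.
  - replace x with (- (- x)) by ring; rewrite gauss_int_opp, Rabs_Ropp.
    destruct (gauss_int_bounds (- x)) as [[H0 H1] _]; [lra |]; rewrite Rabs_right; lra.
Qed.

Lemma is_lim_exp_decay_bound (g : R -> R) (A c : R) : 0 < c ->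
  Rbar_locally p_infty (fun t => 0 <= g t <= A * exp (- (c * t))) ->
  is_lim g p_infty 0.
Proof.
  intros Hc Hg.
  apply (is_lim_le_le_loc (fun _ => 0) (fun t => A * exp (- (c * t))));
    [exact Hg | apply is_lim_const |].
  replace (Finite 0) with (Rbar_mult A 0) by (simpl; rewrite Rmult_0_r; reflexivity).
  apply is_lim_scal_l.
  apply (is_lim_comp exp (fun t => - (c * t)) p_infty 0 m_infty); [exact is_lim_exp_m | |].
  - replace m_infty with (Rbar_opp (Rbar_mult c p_infty)).
    + apply is_lim_opp, is_lim_scal_l, is_lim_id.
    + simpl; destruct (Rle_dec 0 c) as [H | H]; [| lra].
      destruct (Rle_lt_or_eq_dec 0 c H); [reflexivity | lra].
  - apply filter_forall; intros t; discriminate.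
Qed.

Lemma is_lim_gauss : is_lim gauss p_infty 0.
Proof.
  apply (is_lim_exp_decay_bound gauss 1 (/ 2)); [lra |].
  exists 1; intros u Hu; unfold gauss; split; [left; apply exp_pos |].
  rewrite Rmult_1_l; apply exp_le; nra.
Qed.

Lemma is_lim_gauss_int : is_lim gauss_int p_infty (sqrt (PI / 2)).
Proof.
  assert (Hs := sqrt_PI_2_pos); set (s := sqrt (PI / 2)) in *.
  apply (is_lim_le_le_loc (fun x => s - 2 / s * gauss x) (fun _ => s)).
  - exists 0; intros x Hx; destruct (gauss_int_bounds x) as [? ?]; [lra | unfold s; lra].
  - replace (Finite s) with (Rbar_minus s (Rbar_mult (2 / s) 0)) by (simpl; f_equal; ring).
    apply (is_lim_minus _ _ _ s (Rbar_mult (2 / s) 0)); [apply is_lim_const | | easy].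
    apply is_lim_scal_l, is_lim_gauss.
  - apply is_lim_const.
Qed.

Lemma is_lim_gauss_int_m_infty : is_lim gauss_int m_infty (- sqrt (PI / 2)).
Proof.
  apply (is_lim_ext (fun x => - gauss_int (- x))).
  { intros x; rewrite gauss_int_opp; ring. }
  apply (is_lim_opp _ _ (sqrt (PI / 2))).
  apply (is_lim_comp gauss_int Ropp m_infty _ p_infty); [exact is_lim_gauss_int | |].
  - apply (is_lim_opp _ m_infty m_infty), is_lim_id.
  - apply filter_forall; intros x; discriminate.
Qed.

Lemma Phi_gauss_int z : Phi z = / 2 + gauss_int z / (2 * sqrt (PI / 2)).
Proof.
  assert (Hs := sqrt_PI_2_pos).
  assert (H : is_RInt_gen gauss (Rbar_locally m_infty) (at_point z)
                (gauss_int z - - sqrt (PI / 2))).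
  { apply (is_RInt_gen_ext (Derive gauss_int)).
    - apply filter_forall; intros ab u _; apply is_derive_unique, is_derive_gauss_int.
    - apply is_RInt_gen_Derive.
      + apply filter_forall; intros ab u _; eexists; apply is_derive_gauss_int.
      + apply filter_forall; intros ab u _.
        apply (continuous_ext gauss); [| apply continuous_gauss].
        intros v; symmetry; apply is_derive_unique, is_derive_gauss_int.
      + exact is_lim_gauss_int_m_infty.
      + intros P HP; exact (locally_singleton _ _ HP). }
  unfold Phi; fold gauss; rewrite (is_RInt_gen_unique _ _ H).
  replace (sqrt (2 * PI)) with (2 * sqrt (PI / 2)); [field; lra |].
  rewrite <- (sqrt_square 2) at 1 by lra; rewrite <- sqrt_mult by (assert (H' := PI_RGT_0); lra).
  f_equal; field.
Qed.

Lemma Phi_opp z : Phi (- z) = 1 - Phi z.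
Proof.
  assert (Hs := sqrt_PI_2_pos).
  rewrite !Phi_gauss_int, gauss_int_opp; field; lra.
Qed.

Lemma Phi_bounds z : 0 <= Phi z <= 1.
Proof.
  assert (Hs := sqrt_PI_2_pos); assert (H := Rabs_gauss_int_le z).
  apply Rabs_le_between in H; rewrite Phi_gauss_int.
  set (s := sqrt (PI / 2)) in *.
  replace (/ 2 + gauss_int z / (2 * s)) with ((s + gauss_int z) / (2 * s)) by (field; lra).
  split; [apply Rdiv_le_0_compat; lra |].
  apply Rmult_le_reg_r with (2 * s); [lra |].
  unfold Rdiv; rewrite Rmult_assoc, Rinv_l by lra; lra.
Qed.

Lemma Phi_tail_le z : 0 <= z -> 1 - Phi z <= 2 / PI * gauss z.
Proof.
  intros Hz.
  assert (Hs := sqrt_PI_2_pos); assert (Hs2 := sqrt_PI_2_sq).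
  destruct (gauss_int_bounds z Hz) as [_ Htail].
  rewrite Phi_gauss_int.
  set (s := sqrt (PI / 2)) in *.
  replace (2 / PI * gauss z) with ((2 / s * gauss z) / (2 * s))
    by (replace PI with (2 * (s * s)) by lra; field; lra).
  replace (1 - (/ 2 + gauss_int z / (2 * s))) with ((s - gauss_int z) / (2 * s))
    by (field; lra).
  apply Rmult_le_compat_r; [left; apply Rinv_0_lt_compat; lra | exact Htail].
Qed.

Lemma Pquad_factor r alpha sigma d1 d2 beta : d1 <> d2 ->
  Pquad r alpha sigma d1 = 0 -> Pquad r alpha sigma d2 = 0 ->
  Pquad r alpha sigma beta = sigma ^ 2 / 2 * (beta - d1) * (beta - d2).
Proof.
  unfold Pquad; intros H12 E1 E2.
  assert (Hlin : alpha - sigma ^ 2 / 2 = - (sigma ^ 2 / 2) * (d1 + d2)).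
  { apply Rmult_eq_reg_l with (d1 - d2); [nra | lra]. }
  assert (Hr : r = sigma ^ 2 / 2 * d1 ^ 2 + (alpha - sigma ^ 2 / 2) * d1) by lra.
  rewrite Hr, Hlin; ring.
Qed.

Section Drift.

Variables sigma mu L t : R.
Hypotheses (Hsigma : 0 < sigma) (Ht : 0 < t).

Let z := / (sigma * sqrt t) * L + sigma * mu * sqrt t.

Lemma drift_mul_scale : z * (sigma * sqrt t) = L + sigma ^ 2 * mu * t.
Proof.
  assert (Hst := sqrt_lt_R0 t Ht); assert (Hss := sqrt_sqrt t (Rlt_le _ _ Ht)).
  unfold z; set (s := sqrt t) in *; rewrite <- Hss; field; lra.
Qed.

Lemma drift_sq : z ^ 2 = (/ (sigma * sqrt t) * L) ^ 2 + 2 * L * mu + sigma ^ 2 * mu ^ 2 * t.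
Proof.
  assert (Hst := sqrt_lt_R0 t Ht); assert (Hss := sqrt_sqrt t (Rlt_le _ _ Ht)).
  unfold z; set (s := sqrt t) in *; rewrite <- Hss; field; lra.
Qed.

End Drift.

Lemma is_lim_exp_mul_Phi_tail sigma mu delta L :
  0 < sigma -> 0 < delta -> - delta < mu ->
  is_lim (fun t => exp (sigma ^ 2 / 2 * (mu ^ 2 - delta ^ 2) * t) *
                   (1 - Phi (/ (sigma * sqrt t) * L + sigma * mu * sqrt t))) p_infty 0.
Proof.
  intros Hs Hd Hmu.
  set (p := sigma ^ 2 / 2 * (mu ^ 2 - delta ^ 2)).
  assert (Hnonneg : forall z t, 0 <= exp (p * t) * (1 - Phi z)).
  { intros z t; destruct (Phi_bounds z); apply Rmult_le_pos; [left; apply exp_pos | lra]. }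
  destruct (Rle_lt_dec mu 0) as [Hmu0 | Hmu0].
  - assert (Hp : p < 0).
    { assert (mu ^ 2 < delta ^ 2) by nra; assert (0 < sigma ^ 2) by nra; unfold p; nra. }
    apply (is_lim_exp_decay_bound _ 1 (- p)); [lra |].
    apply filter_forall; intros t; split; [apply Hnonneg |].
    rewrite Rmult_1_l, Ropp_mult_distr_l, Ropp_involutive.
    destruct (Phi_bounds (/ (sigma * sqrt t) * L + sigma * mu * sqrt t)).
    assert (He := exp_pos (p * t)); nra.
  - apply (is_lim_exp_decay_bound _ (2 / PI * exp (- (L * mu))) (sigma ^ 2 * delta ^ 2 / 2));
      [assert (0 < sigma ^ 2) by nra; assert (0 < delta ^ 2) by nra; nra |].
    exists (Rmax 0 (- L / (sigma ^ 2 * mu))); intros t Ht.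
    assert (Ht0 : 0 < t) by (eapply Rle_lt_trans; [apply Rmax_l | exact Ht]).
    assert (HtL : - L / (sigma ^ 2 * mu) < t) by (eapply Rle_lt_trans; [apply Rmax_r | exact Ht]).
    split; [apply Hnonneg |].
    set (z := / (sigma * sqrt t) * L + sigma * mu * sqrt t).
    assert (Hz : 0 <= z).
    { assert (Hscale := drift_mul_scale sigma mu L t Hs Ht0); fold z in Hscale.
      assert (Hst : 0 < sigma * sqrt t) by (apply Rmult_lt_0_compat; [| apply sqrt_lt_R0]; lra).
      assert (0 < L + sigma ^ 2 * mu * t).
      { assert (Hsm : 0 < sigma ^ 2 * mu) by (apply Rmult_lt_0_compat; [apply pow_lt |]; lra).
        apply (Rmult_lt_compat_l (sigma ^ 2 * mu)) in HtL; [| exact Hsm].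
        replace (sigma ^ 2 * mu * (- L / (sigma ^ 2 * mu))) with (- L) in HtL by (field; lra).
        lra. }
      nra. }
    assert (Hexponent : p * t - z ^ 2 / 2 <= - (L * mu) + - (sigma ^ 2 * delta ^ 2 / 2 * t)).
    { unfold z; rewrite drift_sq by assumption; unfold p.
      assert (H0 := pow2_ge_0 (/ (sigma * sqrt t) * L)); lra. }
    assert (HPI : 0 < 2 / PI) by (assert (H := PI_RGT_0); apply Rdiv_lt_0_compat; lra).
    apply Rle_trans with (exp (p * t) * (2 / PI * gauss z)).
    { apply Rmult_le_compat_l; [left; apply exp_pos | apply Phi_tail_le, Hz]. }
    unfold gauss; rewrite Rmult_assoc, <- Rmult_assoc, (Rmult_comm _ (2 / PI)), !Rmult_assoc.
    rewrite <- !exp_plus.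
    apply Rmult_le_compat_l; [lra | apply exp_le; lra].
Qed.

Lemma is_lim_scal_0 (f : R -> R) (k : R) (x : Rbar) :
  is_lim f x 0 -> is_lim (fun t => k * f t) x 0.
Proof.
  intros Hf; replace (Finite 0) with (Rbar_mult k 0) by (simpl; rewrite Rmult_0_r; reflexivity).
  apply is_lim_scal_l, Hf.
Qed.

Lemma is_lim_minus_0 (f g : R -> R) (x : Rbar) :
  is_lim f x 0 -> is_lim g x 0 -> is_lim (fun t => f t - g t) x 0.
Proof.
  intros Hf Hg; replace (Finite 0) with (Rbar_minus 0 0) by (simpl; f_equal; ring).
  apply (is_lim_minus f g x 0 0); [exact Hf | exact Hg | easy].
Qed.

Lemma is_lim_upper_tail r alpha sigma d1 d2 x beta c :
  0 < sigma -> d1 < d2 -> Pquad r alpha sigma d1 = 0 -> Pquad r alpha sigma d2 = 0 ->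
  beta < d2 ->
  is_lim (fun t => Rpower x beta * exp (Pquad r alpha sigma beta * t) *
                   (1 - Hfun sigma x d1 d2 beta c t)) p_infty 0.
Proof.
  intros Hs H12 E1 E2 Hb.
  rewrite (Pquad_factor r alpha sigma d1 d2 beta) by lra.
  apply (is_lim_ext (fun t => Rpower x beta *
    (exp (sigma ^ 2 / 2 * (((d1 + d2) / 2 - beta) ^ 2 - ((d2 - d1) / 2) ^ 2) * t) *
     (1 - Phi (/ (sigma * sqrt t) * ln (c / x) + sigma * ((d1 + d2) / 2 - beta) * sqrt t))))).
  { intros t; unfold Hfun.
    replace (sigma ^ 2 / 2 * (((d1 + d2) / 2 - beta) ^ 2 - ((d2 - d1) / 2) ^ 2))
      with (sigma ^ 2 / 2 * (beta - d1) * (beta - d2)) by field.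
    ring. }
  apply is_lim_scal_0, is_lim_exp_mul_Phi_tail; lra.
Qed.

Lemma is_lim_lower_tail r alpha sigma d1 d2 x beta c :
  0 < sigma -> d1 < d2 -> Pquad r alpha sigma d1 = 0 -> Pquad r alpha sigma d2 = 0 ->
  d1 < beta ->
  is_lim (fun t => Rpower x beta * exp (Pquad r alpha sigma beta * t) *
                   Hfun sigma x d1 d2 beta c t) p_infty 0.
Proof.
  intros Hs H12 E1 E2 Hb.
  rewrite (Pquad_factor r alpha sigma d1 d2 beta) by lra.
  apply (is_lim_ext (fun t => Rpower x beta *
    (exp (sigma ^ 2 / 2 * ((beta - (d1 + d2) / 2) ^ 2 - ((d2 - d1) / 2) ^ 2) * t) *
     (1 - Phi (/ (sigma * sqrt t) * - ln (c / x) + sigma * (beta - (d1 + d2) / 2) * sqrt t))))).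
  { intros t; unfold Hfun.
    replace (/ (sigma * sqrt t) * - ln (c / x) + sigma * (beta - (d1 + d2) / 2) * sqrt t)
      with (- (/ (sigma * sqrt t) * ln (c / x) + sigma * ((d1 + d2) / 2 - beta) * sqrt t))
      by ring.
    replace (sigma ^ 2 / 2 * ((beta - (d1 + d2) / 2) ^ 2 - ((d2 - d1) / 2) ^ 2))
      with (sigma ^ 2 / 2 * (beta - d1) * (beta - d2)) by field.
    rewrite Phi_opp; ring. }
  apply is_lim_scal_0, is_lim_exp_mul_Phi_tail; lra.
Qed.

Theorem lemma2 (r alpha sigma d1 d2 x beta a b : R)
  (hsigma : 0 < sigma)
  (hd12 : d1 < d2)
  (hd1 : Pquad r alpha sigma d1 = 0)
  (hd2 : Pquad r alpha sigma d2 = 0)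
  (hx : 0 < x) (ha : 0 < a) (hb : 0 < b) :
  (beta < d2 ->
     is_lim (fun t => Rpower x beta * exp (Pquad r alpha sigma beta * t) *
                      (1 - Hfun sigma x d1 d2 beta a t)) p_infty 0) /\
  (d1 < beta ->
     is_lim (fun t => Rpower x beta * exp (Pquad r alpha sigma beta * t) *
                      Hfun sigma x d1 d2 beta b t) p_infty 0) /\
  (beta = 0 ->
     is_lim (fun t => Rpower x beta * exp (Pquad r alpha sigma beta * t) *
                      (Hfun sigma x d1 d2 beta b t - Hfun sigma x d1 d2 beta a t))
       p_infty 0).
Proof.
  split; [| split]; intros Hbeta.
  - apply is_lim_upper_tail; assumption.
  - apply is_lim_lower_tail; assumption.
  -
    destruct (Rlt_or_le beta d2) as [Hup | Hlow].
    + eapply is_lim_ext; [| apply is_lim_minus_0;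
        [ apply (is_lim_upper_tail r alpha sigma d1 d2 x beta a)
        | apply (is_lim_upper_tail r alpha sigma d1 d2 x beta b) ]]; try assumption.
      intros t; simpl; ring.
    + eapply is_lim_ext; [| apply is_lim_minus_0;
        [ apply (is_lim_lower_tail r alpha sigma d1 d2 x beta b)
        | apply (is_lim_lower_tail r alpha sigma d1 d2 x beta a) ]]; try assumption; try lra.
      intros t; simpl; ring.
Qed.
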